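(* Let $r\ge 2$, let $\pi$ be a set partition of $\{1,\dots,r\}$ having $\{1\}$ as a block, with $k$ blocks, and let $c\in\mathcal{C}(\pi)$. In the construction of $\psi_\pi(c)$ described in the context: (i) at Stage 1, the trees $\tau_1,\dots,\tau_k$ are $\pi$-increasing and irreducible; (ii) for $i=2,\dots,k$, in the input to Stage $i$, the trees $\tau_i,\dots,\tau_k$ are $\pi$-increasing, irreducible, and contain $\mu_i,\dots,\mu_k$ respectively; and if $\tau_1$ has been created by an internal splice at some previous stage, then $\tau_1$ is $\pi$-increasing and reducible; (iii) the tree $\psi_\pi(c)$ is $\pi$-increasing and reducible.
   Context: The blocks of $\pi$ are $\pi_1,\dots,\pi_k$ with maxima $\mu_i=\max\pi_i$, indexed so that $1=\mu_1<\dots<\mu_k=r$ (so $\pi_1=\{1\}$); $\pi^x$ denotes the block containing $x$. $\mathcal{C}(\pi)=\{(c_2,\dots,c_{k-1}):1\le c_i\le\mu_i\}$. An unordered increasing tree is a rooted tree on distinct positive integers, sons unordered, each son larger than its father. A $\pi$-increasing tree is an unordered increasing tree $T$ whose vertex-set is a union of blocks of $\pi$ and such that for any two elements $i<j$ of a same block of $\pi$ contained in $V(T)$, $i$ is an ancestor of $j$ in $T$. $v$-decomposition: for a vertex $v$ of $T$ with chain $a_1<\dots<a_\ell=v$ from the root to $v$, removing the chain edges leaves components $T^{(a_j)}$ rooted at $a_j$. Splice: for unordered increasing trees $T_1,T_2$ with disjoint vertex-sets and $v_1\in V(T_1)$, $v_2\in V(T_2)$, $v_1>v_2$, $\mathrm{spl}(T_1,v_1;T_2,v_2)$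 is the tree on $V(T_1)\cup V(T_2)$ obtained by merging the root-to-$v_1$ chain of $T_1$ and the root-to-$v_2$ chain of $T_2$ into one increasing chain (ending at $v_1$) and attaching at each chain vertex its component from the $v_1$-decomposition of $T_1$ or the $v_2$-decomposition of $T_2$. $v$-dependence graph $G_v(T)$ of a $\pi$-increasing tree $T$: directed graph on the blocks of $\pi$ contained in $V(T)$; for each such block $\pi_i$ whose maximum $\mu_i$ is not on the chain from the root to $v$, $\mu_i$ is a non-root vertex of a unique $T^{(a_j)}$ and there is an edge (possibly a loop) $\pi_i\to\pi^{a_j}$. A $\pi$-increasing tree with maximum vertex $M$ is irreducible if $G_M(T)$ is connected (ignoring directions), reducible otherwise. Construction of $\psi_\pi(c)$: Stage 1: $\tau_\ell$ is the increasing chain on the elements of $\pi_\ell$ ($\ell=1,\dots,k$), and $\nu=1$. For $i=2,\dots,k-1$ (Stage $i$): if $c_i$ is a vertex of $\tau_1$ or $\tau_i$ (Case 1, an internal splice), replace $\tau_1$ by $\mathrm{spl}(\tau_i,\mu_i;\tau_1,\nu)$, discard $\tau_i$, set $\nu=c_i$; otherwise $c_i$ lies in some $\tau_j$, $j>i$ (Case 2, an external splice), replace $\tau_j$ by $\mathrm{spl}(\tau_i,\mu_i;\tau_j,c_i)$ and discard $\tau_i$. Stage $k$ (also an internal splice): $\psi_\pi(c)=\mathrm{spl}(\tau_k,\mu_k;\tau_1,\nu)$. *)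

From mathcomp Require Import all_boot.
From Stdlib Require Import Relations.
Set Implicit Arguments.
Unset Strict Implicit.
Unset Printing Implicit Defensive.

(** * Unordered increasing trees, represented by a vertex list and a parent
    function.  The root is the minimum vertex; the parent of the root is
    irrelevant.  An unordered increasing tree on a finite set V of positive
    integers is exactly the data of a parent  p x < x, p x in V  for every
    non-root x in V. *)
Record itree := ITree { tV : seq nat; tpar : nat -> nat }.

Definition troot (T : itree) : nat := foldr minn (head 0 (tV T)) (tV T).

Definition inc_tree (T : itree) : Prop :=
  [/\ tV T != [::], all (fun x => 0 < x) (tV T) &
      forall x, x \in tV T -> x != troot T -> (tpar T x \in tV T) /\ tpar T x < x].

(* one step towards the root (0 once we leave the tree) *)
Definition up (T : itree) (x : nat) : nat :=
  if (x \in tV T) && (x != troot T) then tpar T x else 0.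

Definition anc (T : itree) (a x : nat) : bool :=
  [&& a \in tV T, x \in tV T & a \in traject (up T) x x.+1].

Definition chain (T : itree) (v : nat) : seq nat := [seq a <- tV T | anc T a v].

(* root a_j of the component T^(a_j) of the v-decomposition containing x *)
Definition comp (T : itree) (v x : nat) : nat :=
  \max_(a <- chain T v | anc T a x) a.

(* splice spl(T1,v1;T2,v2): merged chain, components kept attached *)
Definition spl (T1 : itree) (v1 : nat) (T2 : itree) (v2 : nat) : itree :=
  let ch := chain T1 v1 ++ chain T2 v2 in
  ITree (tV T1 ++ tV T2)
    (fun x => if x \in ch then \max_(a <- ch | a < x) a
              else if x \in tV T1 then tpar T1 x else tpar T2 x).

(** * Set partitions, given as the list of blocks pi_1,...,pi_k
    (1-indexed: blk P i = pi_i). *)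
Definition blk (P : seq (seq nat)) (i : nat) : seq nat := nth [::] P i.-1.
Definition mu (P : seq (seq nat)) (i : nat) : nat := \max_(x <- blk P i) x.
Definition blkof (P : seq (seq nat)) (x : nat) : nat :=
  (find (fun b => x \in b) P).+1.

Definition set_partition1 (r : nat) (P : seq (seq nat)) : Prop :=
  [/\ forall i, 1 <= i <= size P -> blk P i != [::],
      forall x, (1 <= x <= r) <-> (exists2 i, 1 <= i <= size P & x \in blk P i),
      forall x i j, 1 <= i <= size P -> 1 <= j <= size P ->
        x \in blk P i -> x \in blk P j -> i = j,
      exists2 i, 1 <= i <= size P & blk P i =i [:: 1] &
      forall i, 1 <= i < size P -> mu P i < mu P i.+1].

Definition pi_incr (P : seq (seq nat)) (T : itree) : Prop :=
  [/\ inc_tree T,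
      forall x, x \in tV T -> {subset blk P (blkof P x) <= tV T} &
      forall i j, i \in tV T -> j \in tV T -> blkof P i = blkof P j -> i < j ->
        anc T i j].

Definition dep_edge (P : seq (seq nat)) (T : itree) (v : nat) (i j : nat) : Prop :=
  [/\ 1 <= i <= size P, {subset blk P i <= tV T},
      mu P i \notin chain T v & j = blkof P (comp T v (mu P i))].

Definition maxv (T : itree) : nat := \max_(x <- tV T) x.

Definition irreducible (P : seq (seq nat)) (T : itree) : Prop :=
  forall i j, 1 <= i <= size P -> 1 <= j <= size P ->
    {subset blk P i <= tV T} -> {subset blk P j <= tV T} ->
    clos_refl_sym_trans nat (dep_edge P T (maxv T)) i j.

Record cstate := CState {
  taus : nat -> itree;
  nu : nat;
  t1spliced : bool          (* tau_1 created by an internal splice *)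
}.

Definition chain_tree (b : seq nat) : itree :=
  ITree b (fun x => \max_(y <- b | y < x) y).

Definition init (P : seq (seq nat)) : cstate :=
  CState (fun l => chain_tree (blk P l)) 1 false.

Definition upd (f : nat -> itree) (j : nat) (t : itree) : nat -> itree :=
  fun l => if l == j then t else f l.

(* Stage i, 2 <= i <= k-1 *)
Definition stage (P : seq (seq nat)) (c : nat -> nat) (i : nat) (s : cstate) : cstate :=
  let ti := taus s i in
  let t1 := taus s 1 in
  if (c i \in tV t1) || (c i \in tV ti) then
    CState (upd (taus s) 1 (spl ti (mu P i) t1 (nu s))) (c i) true
  else
    let j := i.+1 + find (fun j => c i \in tV (taus s j)) (iota i.+1 (size P - i)) in
    CState (upd (taus s) j (spl ti (mu P i) (taus s j) (c i))) (nu s) (t1spliced s).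

(* input to Stage i: after Stage 1 and Stages 2..i-1 *)
Definition state_before (P : seq (seq nat)) (c : nat -> nat) (i : nat) : cstate :=
  foldl (fun s j => stage P c j s) (init P) (iota 2 (i - 2)).

Definition psi (P : seq (seq nat)) (c : nat -> nat) : itree :=
  let k := size P in
  let s := state_before P c k in
  spl (taus s k) (mu P k) (taus s 1) (nu s).

(* Along the construction we keep an invariant at the input to Stage i: the
   trees tau_1 and tau_i, ..., tau_k have disjoint vertex sets covering
   {1..r}; every tau_l with l >= i is pi-increasing, irreducible and has
   maximum mu_l; tau_1 is pi-increasing, lies below mu_i, and is reducible once
   it has been spliced.

   A splice of pi-increasing trees is pi-increasing, since ancestry inside each
   factor survives.  In an internal splice the maximum mu_i of the splice ends
   the merged chain, so every component of the mu_i-decomposition stays inside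
   one factor and no dependence edge joins the two factors: the result is
   reducible.  In an external splice the maximum mu_j stays in tau_j.  If d is
   the root of its component in the c_i-decomposition of tau_j, the blocks of
   tau_i whose component root lies above d now point to the block of d, the
   others keep their edges, so the two connected dependence graphs are joined
   and the result is irreducible. *)

From mathcomp Require Import all_boot zify.
From Stdlib Require Import Relations.
Set Implicit Arguments.
Unset Strict Implicit.
Unset Printing Implicit Defensive.

Lemma bigmax_seq_eq (s : seq nat) (p : pred nat) m :
  m \in s -> p m -> (forall a, a \in s -> p a -> a <= m) ->
  \max_(a <- s | p a) a = m.
Proof.
move=> ms pm max_m; apply/eqP; rewrite eqn_leq; apply/andP; split.
- by apply/bigmax_leqP_seq => a /max_m.
- exact: (leq_bigmax_seq _ ms pm).
Qed.

Lemma bigmax_seq_mem (s : seq nat) (p : pred nat) :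
  has p s -> (\max_(a <- s | p a) a) \in s /\ p (\max_(a <- s | p a) a).
Proof.
case/hasP=> a0 a0s pa0; set m := \max_(a <- s | p a) a.
have : m = 0 \/ (m \in s /\ p m).
  rewrite /m big_seq_cond.
  apply: (big_ind (fun x => x = 0 \/ (x \in s /\ p x))); first by left.
  - by move=> x y Hx Hy; case: (leqP x y).
  - by move=> i /andP[] *; right.
case=> // m0; have := @leq_bigmax_seq _ s p id a0 a0s pa0.
by rewrite -/m m0 leqn0 => /eqP a00; rewrite -a00.
Qed.

Lemma troot_le T x : x \in tV T -> troot T <= x.
Proof.
rewrite /troot; move: (head _ _) => d; elim: (tV T) => [|h t IH] //=.
rewrite inE => /orP[/eqP->|/IH]; first exact: geq_minl.
exact: leq_trans (geq_minr _ _).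
Qed.

Lemma troot_mem T : tV T != [::] -> troot T \in tV T.
Proof.
rewrite /troot; case: (tV T) => [|h t] //= _.
have : foldr minn h t \in h :: t.
  elim: t => [|h' t IH] /=; first exact: mem_head.
  rewrite !inE; case: leqP => _; first by rewrite eqxx orbT.
  by move: IH; rewrite inE => /orP[->|->]; rewrite ?orbT.
by case: leqP => _; rewrite ?mem_head.
Qed.

Lemma leq_maxv T x : x \in tV T -> x <= maxv T.
Proof. by move=> xT; apply: (@leq_bigmax_seq _ _ predT id). Qed.

Lemma maxv_mem T x : x \in tV T -> maxv T \in tV T.
Proof. by move=> xT; have /bigmax_seq_mem[] : has predT (tV T) by apply/hasP; exists x. Qed.

Lemma maxv_eq T m : m \in tV T -> (forall x, x \in tV T -> x <= m) -> maxv T = m.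
Proof. by move=> mT le_m; apply: bigmax_seq_eq => // x /le_m. Qed.

Lemma find_iota (p : pred nat) a n : has p (iota a n) ->
  a <= a + find p (iota a n) < a + n /\ p (a + find p (iota a n)).
Proof.
move=> hp; have lt_f : find p (iota a n) < n by rewrite -[n in _ < n](size_iota a) -has_find.
by rewrite leq_addr ltn_add2l lt_f -(nth_iota 0 a lt_f) nth_find.
Qed.

Section IncTree.
Variable T : itree.
Hypothesis T_inc : inc_tree T.

Local Notation V := (tV T).
Local Notation root := (troot T).
Local Notation par := (tpar T).

Lemma troot_in : root \in V.
Proof. by case: T_inc => ne _ _; apply: troot_mem. Qed.

Lemma tpar_in x : x \in V -> x != root -> par x \in V /\ par x < x.
Proof. by case: T_inc => _ _; apply. Qed.

Lemma zero_notin : 0 \notin V.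
Proof. by case: T_inc => _ /allP pos _; apply/negP => /pos. Qed.

Lemma up_zero : up T 0 = 0.
Proof. by rewrite /up (negbTE zero_notin). Qed.

Lemma iter_up_zero n : iter n (up T) 0 = 0.
Proof. by elim: n => //= n ->; exact: up_zero. Qed.

Lemma iter_up_le x n : x \in V -> iter n (up T) x \in V -> iter n (up T) x + n <= x.
Proof.
move=> xV; elim: n => [|n IH] /=; first by rewrite addn0.
move: IH; set y := iter n (up T) x => IH.
rewrite {1 2}/up; case: ifP => [/andP[yV yr] _|_]; last by rewrite (negbTE zero_notin).
have [_ lt_py] := tpar_in yV yr; have := IH yV; lia.
Qed.

Lemma ancP a x : anc T a x <-> [/\ a \in V, x \in V & exists n, iter n (up T) x = a].
Proof.
rewrite /anc; split.
- case/and3P=> aV xV /trajectP[n _ an]; subst a; split => //; by exists n.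
- case=> aV xV [n iter_n]; apply/and3P; split => //; apply/trajectP; exists n => //.
  by have := @iter_up_le x n xV; rewrite iter_n => /(_ aV); lia.
Qed.

Lemma anc_meml a x : anc T a x -> a \in V.
Proof. by case/and3P. Qed.

Lemma anc_refl x : x \in V -> anc T x x.
Proof. by move=> xV; apply/ancP; split => //; exists 0. Qed.

Lemma anc_trans a b x : anc T a b -> anc T b x -> anc T a x.
Proof.
move=> /ancP[aV bV [n iter_n]] /ancP[_ xV [m iter_m]]; apply/ancP; split => //.
by exists (n + m); rewrite iterD iter_m.
Qed.

Lemma anc_leq a x : anc T a x -> a <= x.
Proof.
by case/ancP=> aV xV [n iter_n]; have := @iter_up_le x n xV; rewrite iter_n => /(_ aV); lia.
Qed.

Lemma anc_total a b x : anc T a x -> anc T b x -> anc T a b \/ anc T b a.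
Proof.
move=> /ancP[aV xV [n iter_n]] /ancP[bV _ [m iter_m]].
case: (leqP n m) => [le_nm|/ltnW le_mn].
- by right; apply/ancP; split => //; exists (m - n); rewrite -iter_m -iter_n -iterD subnK.
- by left; apply/ancP; split => //; exists (n - m); rewrite -iter_m -iter_n -iterD subnK.
Qed.

Lemma ancE a x : x \in V -> anc T a x <-> a = x \/ (x != root /\ anc T a (par x)).
Proof.
move=> xV; have up_x : up T x = if x != root then par x else 0 by rewrite /up xV.
split.
- case/ancP=> aV _ [[|n]]; first by left.
  rewrite iterSr up_x; case: (x =P root) => /= [_ iter_n|/eqP xr iter_n].
  + by move: aV; rewrite -iter_n iter_up_zero (negbTE zero_notin).
  + have [pV _] := tpar_in xV xr.
    by right; split => //; apply/ancP; split => //; exists n.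
- case=> [->|[xr /ancP[aV pV [n iter_n]]]]; first exact: anc_refl.
  by apply/ancP; split => //; exists n.+1; rewrite iterSr up_x xr.
Qed.

Lemma anc_troot x : x \in V -> anc T root x.
Proof.
elim/ltn_ind: x => x IH xV; apply/ancE => //.
case: (x =P root) => [->|/eqP xr]; first by left.
by have [pV lt_px] := tpar_in xV xr; right; split => //; apply: IH.
Qed.

Lemma anc_tpar x : x \in V -> x != root -> anc T (par x) x.
Proof.
move=> xV xr; have [pV _] := tpar_in xV xr.
by apply/ancE => //; right; split => //; apply: anc_refl.
Qed.

Lemma anc_chain_leq a b v : anc T a v -> anc T b v -> a <= b -> anc T a b.
Proof.
move=> av bv le_ab; case: (anc_total av bv) => // ba.
have -> : a = b by apply/eqP; rewrite eqn_leq le_ab anc_leq.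
exact: anc_refl (anc_meml bv).
Qed.

Lemma mem_chain v a : (a \in chain T v) = anc T a v.
Proof. by rewrite mem_filter; apply/andP/idP => [[]//|av]; split => //; apply: anc_meml av. Qed.

Lemma compP v x : v \in V -> x \in V ->
  [/\ anc T (comp T v x) v, anc T (comp T v x) x &
      forall a, anc T a v -> anc T a x -> a <= comp T v x].
Proof.
move=> vV xV; have : has (fun a => anc T a x) (chain T v).
  by apply/hasP; exists root; rewrite ?mem_chain; apply: anc_troot.
case/bigmax_seq_mem; rewrite mem_chain => cv cx; split => // a av ax.
by apply: leq_bigmax_seq; rewrite ?mem_chain.
Qed.

Lemma comp_eq v x m : anc T m v -> anc T m x ->
  (forall a, anc T a v -> anc T a x -> a <= m) -> comp T v x = m.
Proof.
move=> mv mx max_m; apply: bigmax_seq_eq; rewrite ?mem_chain //.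
by move=> a; rewrite mem_chain; apply: max_m.
Qed.

Lemma comp_tpar v x : v \in V -> x \in V -> ~~ anc T x v -> x != root ->
  comp T v (par x) = comp T v x.
Proof.
move=> vV xV xv xr; have [cv cx max_c] := compP vV xV.
apply: comp_eq => // [|a av ap]; last exact/max_c/(anc_trans ap)/anc_tpar.
by case/(ancE _ xV): cx => [c_x|[_ //]]; rewrite -c_x cv in xv.
Qed.

Lemma anc_predecessor_chain (s : seq nat) : {subset s <= V} -> root \in s ->
  (forall x, x \in s -> x != root -> par x = \max_(a <- s | a < x) a) ->
  forall y, y \in s -> forall a, anc T a y <-> (a \in s /\ a <= y).
Proof.
move=> sV rs par_pred; elim/ltn_ind => y IH ys a; rewrite ancE ?sV //.
case: (y =P root) => [->|/eqP yr].
- split=> [[->//|[]//]|[aS ay]]; left.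
  by apply/eqP; rewrite eqn_leq ay troot_le ?sV.
- have : has (fun a => a < y) s.
    by apply/hasP; exists root; rewrite // ltn_neqAle eq_sym yr troot_le ?sV.
  case/bigmax_seq_mem; rewrite -par_pred // => ps lt_py; rewrite IH //.
  split=> [[->|[_ [aS ap]]]|[aS ay]]; first by [].
  + by split; last exact: leq_trans ap (ltnW lt_py).
  + case: (a =P y) => [->|/eqP ay']; [by left | right; split => //; split => //].
    by rewrite par_pred //; apply: leq_bigmax_seq; rewrite // ltn_neqAle ay' ay.
Qed.

End IncTree.

Section Splice.
Variables (T1 T2 : itree) (v1 v2 : nat).
Hypotheses (T1_inc : inc_tree T1) (T2_inc : inc_tree T2).
Hypothesis disj : forall x, x \in tV T1 -> x \notin tV T2.
Hypotheses (v1T : v1 \in tV T1) (v2T : v2 \in tV T2).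

Local Notation T := (spl T1 v1 T2 v2).
Local Notation ch := (chain T1 v1 ++ chain T2 v2).

Lemma disj_sym x : x \in tV T2 -> x \notin tV T1.
Proof. by apply: contraTN => /disj. Qed.

Lemma disj_memF x : x \in tV T1 -> x \in tV T2 -> False.
Proof. by move=> /disj /negP. Qed.

Lemma mem_spl x : (x \in tV T) = (x \in tV T1) || (x \in tV T2).
Proof. exact: mem_cat. Qed.

Lemma mem_spl_chains x : (x \in ch) = anc T1 x v1 || anc T2 x v2.
Proof. by rewrite mem_cat !mem_chain. Qed.

Lemma spl_chains_sub x : x \in ch -> x \in tV T.
Proof.
by rewrite mem_spl_chains mem_spl => /orP[/anc_meml ->|/anc_meml ->]; rewrite ?orbT.
Qed.

Lemma troot1_spl_chains : troot T1 \in ch.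
Proof. by rewrite mem_spl_chains anc_troot. Qed.

Lemma troot2_spl_chains : troot T2 \in ch.
Proof. by rewrite mem_spl_chains (anc_troot T2_inc) ?orbT. Qed.

Lemma troot_spl_chains : troot T \in ch.
Proof.
have : troot T \in tV T by apply: troot_mem => /=; case: T1_inc; case: (tV T1).
rewrite mem_spl => /orP[rT|rT].
- suff -> : troot T = troot T1 by apply: troot1_spl_chains.
  by apply/eqP; rewrite eqn_leq !troot_le ?mem_spl ?troot_in.
- suff -> : troot T = troot T2 by apply: troot2_spl_chains.
  by apply/eqP; rewrite eqn_leq !troot_le ?mem_spl ?troot_in ?orbT.
Qed.

Lemma tpar_spl_chains x : x \in ch -> tpar T x = \max_(a <- ch | a < x) a.
Proof. by rewrite /= => ->. Qed.

Lemma tpar_spl1 x : x \notin ch -> x \in tV T1 -> tpar T x = tpar T1 x.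
Proof. by rewrite /= => /negbTE -> ->. Qed.

Lemma tpar_spl2 x : x \notin ch -> x \in tV T2 -> tpar T x = tpar T2 x.
Proof. by rewrite /= => /negbTE -> xT2; rewrite (negbTE (disj_sym xT2)). Qed.

Lemma inc_tree_spl : inc_tree T.
Proof.
split.
- by rewrite /=; case: T1_inc; case: (tV T1).
- by rewrite all_cat; case: T1_inc => _ -> _; case: T2_inc => _ -> _.
- move=> x xT xr; case: (boolP (x \in ch)) => xch.
  + have : has (fun a => a < x) ch.
      apply/hasP; exists (troot T); first exact: troot_spl_chains.
      by rewrite ltn_neqAle eq_sym xr troot_le.
    by case/bigmax_seq_mem; rewrite tpar_spl_chains // => /spl_chains_sub.
  + have xr1 : x != troot T1 by apply: contraNneq xch => ->; apply: troot1_spl_chains.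
    have xr2 : x != troot T2 by apply: contraNneq xch => ->; apply: troot2_spl_chains.
    move: xT; rewrite mem_spl => /orP[xT1|xT2].
    * by rewrite tpar_spl1 // mem_spl; case: (tpar_in T1_inc xT1 xr1) => ->.
    * by rewrite tpar_spl2 // mem_spl; case: (tpar_in T2_inc xT2 xr2) => -> ->; rewrite orbT.
Qed.

Lemma anc_spl_chains y a : y \in ch -> anc T a y <-> (a \in ch /\ a <= y).
Proof.
move=> ych; apply: (anc_predecessor_chain inc_tree_spl) => //.
- exact: spl_chains_sub.
- exact: troot_spl_chains.
- by move=> x xch _; apply: tpar_spl_chains.
Qed.

Lemma anc_spl1 x a : x \in tV T1 ->
  anc T a x <-> anc T1 a x \/ (a \in chain T2 v2 /\ a < comp T1 v1 x).
Proof.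
elim/ltn_ind: x a => x IH a xT1; case: (boolP (anc T1 x v1)) => xv.
- have -> : comp T1 v1 x = x.
    by apply: comp_eq => //; [apply: anc_refl | move=> b _; apply: anc_leq].
  rewrite anc_spl_chains ?mem_spl_chains ?xv // (mem_chain T2).
  split=> [[/orP[av|av] ax]|[ax|[av ax]]].
  + by left; apply: anc_chain_leq av xv ax.
  + right; split=> //; rewrite ltn_neqAle ax andbT.
    by apply: contraTneq xT1 => <-; apply/disj_sym/(anc_meml av).
  + by rewrite (anc_trans T1_inc ax xv) (anc_leq T1_inc ax).
  + by rewrite av orbT (ltnW ax).
- have xch : x \notin ch.
    rewrite mem_spl_chains negb_or xv /=.
    by apply: contraTN xT1 => /anc_meml; apply: disj_sym.
  have xr : x != troot T by apply: contraNneq xch => ->; apply: troot_spl_chains.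
  have xr1 : x != troot T1 by apply: contraNneq xch => ->; apply: troot1_spl_chains.
  have [pT1 lt_px] := tpar_in T1_inc xT1 xr1.
  rewrite (ancE inc_tree_spl) ?mem_spl ?xT1 // (ancE T1_inc) // tpar_spl1 //.
  rewrite (IH _ lt_px a pT1) (comp_tpar T1_inc) //; tauto.
Qed.

End Splice.

Section SpliceSym.
Variables (T1 T2 : itree) (v1 v2 : nat).
Hypotheses (T1_inc : inc_tree T1) (T2_inc : inc_tree T2).
Hypothesis disj : forall x, x \in tV T1 -> x \notin tV T2.
Hypotheses (v1T : v1 \in tV T1) (v2T : v2 \in tV T2).

Lemma up_splC x : up (spl T1 v1 T2 v2) x = up (spl T2 v2 T1 v1) x.
Proof.
have memC y : (y \in tV (spl T1 v1 T2 v2)) = (y \in tV (spl T2 v2 T1 v1)).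
  by rewrite !mem_spl orbC.
rewrite /up memC.
have -> : troot (spl T1 v1 T2 v2) = troot (spl T2 v2 T1 v1).
  have inc12 := inc_tree_spl T1_inc T2_inc disj v1T v2T.
  have inc21 := inc_tree_spl T2_inc T1_inc (disj_sym disj) v2T v1T.
  by apply/eqP; rewrite eqn_leq !troot_le // ?memC ?(troot_in inc21) // -memC (troot_in inc12).
case: ifP => // /andP[xT _].
have chC : (x \in chain T1 v1 ++ chain T2 v2) = (x \in chain T2 v2 ++ chain T1 v1).
  by rewrite !mem_cat orbC.
case: (boolP (x \in chain T1 v1 ++ chain T2 v2)) => xch.
- rewrite !tpar_spl_chains -?chC //.
  by apply: perm_big; rewrite perm_catC.
- move: xT; rewrite -memC mem_spl => /orP[xT|xT].
  + by rewrite tpar_spl1 // (tpar_spl2 (disj_sym disj)) // -chC.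
  + by rewrite (tpar_spl2 disj) // tpar_spl1 // -chC.
Qed.

Lemma anc_splC a x : anc (spl T1 v1 T2 v2) a x <-> anc (spl T2 v2 T1 v1) a x.
Proof.
have inc12 := inc_tree_spl T1_inc T2_inc disj v1T v2T.
have inc21 := inc_tree_spl T2_inc T1_inc (disj_sym disj) v2T v1T.
have iterC n : iter n (up (spl T1 v1 T2 v2)) x = iter n (up (spl T2 v2 T1 v1)) x.
  by apply: eq_iter => y; apply: up_splC.
rewrite (ancP inc12) (ancP inc21) !mem_spl.
by split=> -[aV xV [n iter_n]]; split; rewrite 1?orbC //; exists n; rewrite -iter_n iterC.
Qed.

Lemma anc_spl2 x a : x \in tV T2 ->
  anc (spl T1 v1 T2 v2) a x <-> anc T2 a x \/ (a \in chain T1 v1 /\ a < comp T2 v2 x).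
Proof. by move=> xT2; rewrite anc_splC; apply: anc_spl1 => //; apply: disj_sym. Qed.

End SpliceSym.

Section SpliceComponents.
Variables (T1 T2 : itree) (v1 v2 : nat).
Hypotheses (T1_inc : inc_tree T1) (T2_inc : inc_tree T2).
Hypothesis disj : forall x, x \in tV T1 -> x \notin tV T2.
Hypotheses (v1T : v1 \in tV T1) (v2T : v2 \in tV T2).

Local Notation T := (spl T1 v1 T2 v2).
Let anc1 := anc_spl1 T1_inc T2_inc disj v1T v2T.
Let anc2 := anc_spl2 T1_inc T2_inc disj v1T v2T.

Section Top.
Hypotheses (v1_max : forall x, x \in tV T1 -> x <= v1)
           (v1_gt : forall x, x \in tV T2 -> x < v1).

Lemma maxv_spl_top : maxv T = v1.
Proof.
by apply: maxv_eq => [|x]; rewrite mem_spl ?v1T // => /orP[/v1_max|/v1_gt/ltnW].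
Qed.

Lemma anc_spl_top a : anc T a v1 <-> a \in chain T1 v1 ++ chain T2 v2.
Proof.
have v1ch : v1 \in chain T1 v1 ++ chain T2 v2 by rewrite mem_spl_chains ?(anc_refl T1_inc).
rewrite anc_spl_chains //; split=> [[]//|ach]; split=> //.
move: ach; rewrite mem_spl_chains.
by case/orP=> [/anc_meml/v1_max|/anc_meml/v1_gt/ltnW].
Qed.

Lemma comp_spl_top1 y : y \in tV T1 -> comp T v1 y = comp T1 v1 y.
Proof.
move=> yT1; have [cv cy c_max] := compP T1_inc v1T yT1.
apply: comp_eq.
- by apply/anc_spl_top; rewrite mem_spl_chains cv.
- by apply/(anc1 _ yT1); left.
- move=> a /anc_spl_top; rewrite mem_spl_chains.
  move=> /orP[av|av] /(anc1 _ yT1) [ay|[_ /ltnW //]].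
  + exact: c_max.
  + by case: (disj_memF disj (anc_meml ay) (anc_meml av)).
Qed.

Lemma comp_spl_top2 y : y \in tV T2 -> comp T v1 y = comp T2 v2 y.
Proof.
move=> yT2; have [cv cy c_max] := compP T2_inc v2T yT2.
apply: comp_eq.
- by apply/anc_spl_top; rewrite mem_spl_chains cv orbT.
- by apply/(anc2 _ yT2); left.
- move=> a /anc_spl_top; rewrite mem_spl_chains.
  move=> /orP[av|av] /(anc2 _ yT2) [ay|[_ /ltnW //]].
  + by case: (disj_memF disj (anc_meml av) (anc_meml ay)).
  + exact: c_max.
Qed.

End Top.

Section Inner.
Variable w : nat.
Hypothesis wT : w \in tV T2.

Local Notation d := (comp T2 v2 w).

Lemma anc_spl_inner1 a : a \in tV T1 -> anc T a w <-> anc T1 a v1 /\ a < d.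
Proof.
move=> aT1; rewrite (anc2 _ wT) (mem_chain T1).
by split=> [[/anc_meml /(disj_sym disj) /negP //|//]|]; right.
Qed.

Lemma anc_spl_inner2 a : a \in tV T2 -> anc T a w <-> anc T2 a w.
Proof.
move=> aT2; rewrite (anc2 _ wT) (mem_chain T1).
by split=> [[//|[/anc_meml/disj]]|]; [rewrite aT2 | left].
Qed.

Lemma comp_spl_inner_lt y : y \in tV T1 -> comp T1 v1 y < d ->
  comp T w y = comp T1 v1 y.
Proof.
move=> yT1 lt_cd; have [cv cy c_max] := compP T1_inc v1T yT1.
apply: comp_eq.
- by apply/(anc_spl_inner1 (anc_meml cv)).
- by apply/(anc1 _ yT1); left.
- move=> a aw /(anc1 _ yT1) [ay|[_ /ltnW //]].
  have [av _] := (anc_spl_inner1 (anc_meml ay)).1 aw.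
  exact: c_max.
Qed.

Lemma comp_spl_inner_gt y : y \in tV T1 -> d < comp T1 v1 y -> comp T w y = d.
Proof.
move=> yT1 lt_dc; have [dv dw d_max] := compP T2_inc v2T wT.
apply: comp_eq.
- by apply/(anc_spl_inner2 (anc_meml dv)).
- by apply/(anc1 _ yT1); right; rewrite (mem_chain T2).
- move=> a aw /(anc1 _ yT1) [ay|[av _]].
  + have [_ /ltnW //] := (anc_spl_inner1 (anc_meml ay)).1 aw.
  + rewrite mem_chain in av; apply: d_max => //.
    exact/(anc_spl_inner2 (anc_meml av)).
Qed.

Lemma comp_spl_inner2 y : y \in tV T2 -> comp T w y = comp T2 w y.
Proof.
move=> yT2; have [cw cy c_max] := compP T2_inc wT yT2.
have [fv fy _] := compP T2_inc v2T yT2.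
have [dv dw d_max] := compP T2_inc v2T wT.
apply: comp_eq.
- by apply/(anc_spl_inner2 (anc_meml cw)).
- by apply/(anc2 _ yT2); left.
- move=> a aw /(anc2 _ yT2) [ay|[av lt_af]].
  + by apply: c_max => //; apply/(anc_spl_inner2 (anc_meml ay)).
  + rewrite mem_chain in av; have [_ lt_ad] := (anc_spl_inner1 (anc_meml av)).1 aw.
    (* [a] lies below both [d] and [comp T2 v2 y], and the smaller of these two
       ancestors of [v2] is a common ancestor of [w] and [y] in [T2]. *)
    case: (leqP d (comp T2 v2 y)) => [le_df|lt_fd].
    * have dy : anc T2 d y := anc_trans T2_inc (anc_chain_leq T2_inc dv fv le_df) fy.
      exact: leq_trans (ltnW lt_ad) (c_max _ dw dy).
    * have fw : anc T2 (comp T2 v2 y) w :=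
        anc_trans T2_inc (anc_chain_leq T2_inc fv dv (ltnW lt_fd)) dw.
      exact: leq_trans (ltnW lt_af) (c_max _ fw fy).
Qed.

End Inner.
End SpliceComponents.

Lemma clos_rst_mono (R R' : relation nat) x y : (forall a b, R a b -> R' a b) ->
  clos_refl_sym_trans nat R x y -> clos_refl_sym_trans nat R' x y.
Proof.
move=> RR'; elim=> {x y} [x y /RR'|x|x y _|x y z _ IH1 _ IH2].
- exact: rst_step.
- exact: rst_refl.
- exact: rst_sym.
- exact: rst_trans IH1 IH2.
Qed.

Section Partition.
Variables (r : nat) (P : seq (seq nat)).
Hypothesis HP : set_partition1 r P.
Local Notation k := (size P).

Definition in_range (T : itree) := forall x, x \in tV T -> 1 <= x <= r.

Lemma blkofP x : 1 <= x <= r -> 1 <= blkof P x <= k /\ x \in blk P (blkof P x).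
Proof.
case: HP => _ cover _ _ _ /cover[i /andP[i1 ik] xi].
have : has (fun b => x \in b) P.
  by apply/hasP; exists (blk P i) => //; apply: mem_nth; rewrite prednK.
by move=> xP; rewrite /blk /blkof /= -has_find xP (nth_find [::] xP).
Qed.

Lemma mem_blk_range x i : 1 <= i <= k -> x \in blk P i -> 1 <= x <= r.
Proof. by case: HP => _ cover _ _ _ ik xi; apply/cover; exists i. Qed.

Lemma blkof_blk x i : 1 <= i <= k -> x \in blk P i -> blkof P x = i.
Proof.
move=> ik xi; have [bk xb] := blkofP (mem_blk_range ik xi).
by case: HP => _ _ uniq_blk _ _; apply: (uniq_blk x).
Qed.

Lemma mu_mem i : 1 <= i <= k -> mu P i \in blk P i.
Proof.
move=> ik; have : has predT (blk P i).
  by case: HP => ne _ _ _ _; move: (ne i ik); case: (blk P i).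
by case/bigmax_seq_mem.
Qed.

Lemma leq_mu x i : x \in blk P i -> x <= mu P i.
Proof. by move=> xi; apply: (@leq_bigmax_seq _ _ predT id). Qed.

Lemma mu_ltn i j : 1 <= i -> i < j -> j <= k -> mu P i < mu P j.
Proof.
case: HP => _ _ _ _ mu_incr i1; elim: j => // j IH.
rewrite ltnS leq_eqVlt => /orP[/eqP <- jk|ij jk]; first by apply: mu_incr; rewrite i1.
by apply: ltn_trans (IH ij (ltnW jk)) _; apply: mu_incr; rewrite (leq_trans i1 (ltnW ij)).
Qed.

(* [{1}] is the block of least maximum, hence the first one. *)
Lemma blk1_partition : 2 <= r -> 1 \in blk P 1 /\ 2 <= k.
Proof.
move=> r2; case: HP => _ _ _ [i0 /andP[i01 i0k] blk_i0] _.
have mu_i0 : mu P i0 = 1 by have := mu_mem (i := i0); rewrite blk_i0 i01 i0k inE => /(_ isT) /eqP.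
have k1 : 1 <= 1 <= k by rewrite leqnn (leq_trans i01 i0k).
have i0_1 : i0 = 1.
  apply/eqP; rewrite eqn_leq i01 andbT leqNgt; apply/negP => lt1i0.
  have := mu_ltn (leqnn 1) lt1i0 i0k; rewrite mu_i0 ltnS leqn0 => /eqP mu1.
  by have := mem_blk_range k1 (mu_mem k1); rewrite mu1.
subst i0; split; first by rewrite blk_i0 inE.
have r2' : 1 <= 2 <= r by rewrite r2.
have [/andP[b1 bk] b2] := blkofP r2'.
case: (blkof P 2 =P 1) => [b21|/eqP b21]; first by move: b2; rewrite b21 blk_i0.
by apply: leq_trans bk; rewrite ltn_neqAle eq_sym b21.
Qed.

Lemma pi_incr_blk_sub T x : pi_incr P T -> x \in tV T -> {subset blk P (blkof P x) <= tV T}.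
Proof. by case=> _ + _; apply. Qed.

Lemma pi_incr_anc T i j : pi_incr P T -> i \in tV T -> j \in tV T ->
  blkof P i = blkof P j -> i < j -> anc T i j.
Proof. by case=> _ _; apply. Qed.

Lemma pi_incr_blk T x : pi_incr P T -> in_range T -> x \in tV T ->
  [/\ 1 <= blkof P x <= k, x \in blk P (blkof P x),
      {subset blk P (blkof P x) <= tV T} & mu P (blkof P x) \in tV T].
Proof.
move=> piT rT xT; have [bk xb] := blkofP (rT _ xT).
have sub := pi_incr_blk_sub piT xT; split => //; exact/sub/mu_mem.
Qed.

Lemma pi_incr_blk_mu T i : pi_incr P T -> 1 <= i <= k -> mu P i \in tV T ->
  {subset blk P i <= tV T}.
Proof. by move=> piT ik muT; rewrite -(blkof_blk ik (mu_mem ik)); apply: pi_incr_blk_sub. Qed.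

Section SplicePi.
Variables (T1 T2 : itree) (v1 v2 : nat).
Hypotheses (T1_pi : pi_incr P T1) (T2_pi : pi_incr P T2).
Hypotheses (T1_range : in_range T1) (T2_range : in_range T2).
Hypothesis disj : forall x, x \in tV T1 -> x \notin tV T2.
Hypotheses (v1T : v1 \in tV T1) (v2T : v2 \in tV T2).

Local Notation T := (spl T1 v1 T2 v2).
Let T1_inc : inc_tree T1. Proof. by case: T1_pi. Qed.
Let T2_inc : inc_tree T2. Proof. by case: T2_pi. Qed.

Lemma in_range_spl : in_range T.
Proof. by move=> x; rewrite mem_spl => /orP[/T1_range|/T2_range]. Qed.

Lemma sub_spl1 : {subset tV T1 <= tV T}.
Proof. by move=> x xT; rewrite mem_spl xT. Qed.

Lemma sub_spl2 : {subset tV T2 <= tV T}.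
Proof. by move=> x xT; rewrite mem_spl xT orbT. Qed.

Lemma blk_sub_spl i : 1 <= i <= k -> {subset blk P i <= tV T} ->
  {subset blk P i <= tV T1} \/ {subset blk P i <= tV T2}.
Proof.
move=> ik sub; have := sub _ (mu_mem ik); rewrite mem_spl.
by case/orP=> [/(pi_incr_blk_mu T1_pi ik)|/(pi_incr_blk_mu T2_pi ik)]; [left|right].
Qed.

Lemma pi_incr_spl : pi_incr P T.
Proof.
split; first exact: inc_tree_spl.
- move=> x; rewrite mem_spl => /orP[xT|xT] y /(pi_incr_blk_sub _ xT) yT.
  + exact/sub_spl1/yT.
  + exact/sub_spl2/yT.
- move=> i j; rewrite mem_spl => /orP[iT|iT] jT same_blk lt_ij.
  + have [_ _ sub _] := pi_incr_blk T1_pi T1_range iT.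
    have jT1 : j \in tV T1.
      by apply: sub; rewrite same_blk; case: (blkofP (in_range_spl jT)).
    apply/(anc_spl1 T1_inc T2_inc disj v1T v2T _ jT1); left.
    exact: pi_incr_anc T1_pi iT jT1 same_blk lt_ij.
  + have [_ _ sub _] := pi_incr_blk T2_pi T2_range iT.
    have jT2 : j \in tV T2.
      by apply: sub; rewrite same_blk; case: (blkofP (in_range_spl jT)).
    apply/(anc_spl2 T1_inc T2_inc disj v1T v2T _ jT2); left.
    exact: pi_incr_anc T2_pi iT jT2 same_blk lt_ij.
Qed.

Section Top.
Hypotheses (v1_max : forall x, x \in tV T1 -> x <= v1)
           (v1_gt : forall x, x \in tV T2 -> x < v1).

Lemma dep_edge_spl_top i j : dep_edge P T v1 i j -> (mu P i \in tV T1) = (mu P j \in tV T1).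
Proof.
case=> ik sub _ ->; move: (sub _ (mu_mem ik)); rewrite mem_spl => /orP[muT|muT].
- rewrite comp_spl_top1 // muT; have [cv _ _] := compP T1_inc v1T muT.
  by have [_ _ _ ->] := pi_incr_blk T1_pi T1_range (anc_meml cv).
- rewrite comp_spl_top2 // (negbTE (disj_sym disj muT)).
  have [cv _ _] := compP T2_inc v2T muT.
  by have [_ _ _ /(disj_sym disj) /negbTE ->] := pi_incr_blk T2_pi T2_range (anc_meml cv).
Qed.

Lemma reducible_spl_top : ~ irreducible P T.
Proof.
move=> irr.
have [bk1 _ sub1 mu1] := pi_incr_blk T1_pi T1_range v1T.
have [bk2 _ sub2 mu2] := pi_incr_blk T2_pi T2_range v2T.
have := irr _ _ bk1 bk2 (fun x h => sub_spl1 (sub1 x h)) (fun x h => sub_spl2 (sub2 x h)).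
rewrite maxv_spl_top // => conn12.
suff : (mu P (blkof P v1) \in tV T1) = (mu P (blkof P v2) \in tV T1).
  by rewrite mu1 (negbTE (disj_sym disj mu2)).
by elim: conn12 => [x y /dep_edge_spl_top || x y _ -> | x y z _ -> _ ->].
Qed.

End Top.

Section Inner.
Hypotheses (lt_v21 : v2 < v1) (v1_max : forall x, x \in tV T1 -> x <= v1)
           (lt_maxv2 : forall x, x \in tV T1 -> x < maxv T2).
Hypotheses (T1_irr : irreducible P T1) (T2_irr : irreducible P T2).

Local Notation M := (maxv T2).
Local Notation d := (comp T2 v2 M).
Local Notation D := (blkof P d).
Local Notation conn := (clos_refl_sym_trans nat (dep_edge P T M)).

Let M_mem : M \in tV T2 := maxv_mem v2T.
Let inner1 := anc_spl_inner1 T1_inc T2_inc disj v1T v2T M_mem.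
Let inner2 := anc_spl_inner2 T1_inc T2_inc disj v1T v2T M_mem.

Lemma maxv_spl_inner : maxv T = M.
Proof.
apply: maxv_eq; first exact/sub_spl2/M_mem.
by move=> x; rewrite mem_spl => /orP[/lt_maxv2/ltnW|/leq_maxv].
Qed.

Lemma dep_edge_spl_inner b : 1 <= b <= k -> {subset blk P b <= tV T1} ->
  d < comp T1 v1 (mu P b) -> dep_edge P T M b D.
Proof.
move=> bk sub lt_dc; have muT := sub _ (mu_mem bk).
split=> //; first by move=> x /sub /sub_spl1.
- rewrite mem_chain; apply/negP.
  move/(inner1 muT) => [_ lt_mud].
  have [_ cmu _] := compP T1_inc v1T muT.
  by rewrite ltnNge (ltnW (leq_trans lt_dc (anc_leq T1_inc cmu))) in lt_mud.
- by rewrite (comp_spl_inner_gt T1_inc T2_inc disj v1T v2T M_mem muT).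
Qed.

Lemma conn_dep_edge1 i j : dep_edge P T1 v1 i j -> conn i D <-> conn j D.
Proof.
case=> ik sub not_ch ->; have muT := sub _ (mu_mem ik).
have [cv cmu c_max] := compP T1_inc v1T muT.
set e := comp T1 v1 (mu P i) in cv cmu c_max *.
have eT := anc_meml cv; have [jk ej sub_j mu_j] := pi_incr_blk T1_pi T1_range eT.
case: (ltngtP e d) => [lt_ed|lt_de|ed].
- have i_e : dep_edge P T M i (blkof P e).
    split=> //; first by move=> x /sub /sub_spl1.
    + rewrite mem_chain; apply/negP.
      move/(inner1 muT) => [mu_v1 _].
      by rewrite mem_chain mu_v1 in not_ch.
    + by rewrite (comp_spl_inner_lt T1_inc T2_inc disj v1T v2T M_mem muT lt_ed).
  by split=> C; apply: rst_trans C; [apply/rst_sym/rst_step | apply: rst_step].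
- have e_mu : anc T1 e (mu P (blkof P e)).
    move: (leq_mu ej); rewrite leq_eqVlt => /orP[/eqP <-|lt_emu].
    + exact: anc_refl.
    + by apply: pi_incr_anc T1_pi eT mu_j _ lt_emu; rewrite (blkof_blk jk (mu_mem jk)).
  have [_ _ c_max'] := compP T1_inc v1T mu_j.
  have e_D : dep_edge P T M (blkof P e) D.
    by apply: dep_edge_spl_inner => //; apply: leq_trans lt_de (c_max' _ cv e_mu).
  by split=> _; apply: rst_step; [exact: e_D | exact: dep_edge_spl_inner ik sub lt_de].
- have [dv _ _] := compP T2_inc v2T M_mem.
  by case: (disj_memF disj eT); rewrite ed (anc_meml dv).
Qed.

Lemma conn_spl1 b : 1 <= b <= k -> {subset blk P b <= tV T1} -> conn b D.
Proof.
move=> bk sub.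
have [vk vb sub_v _] := pi_incr_blk T1_pi T1_range v1T.
have mu_v : mu P (blkof P v1) = v1.
  by apply/eqP; rewrite eqn_leq leq_mu // andbT; apply/v1_max/sub_v/mu_mem.
have comp_v : comp T1 v1 v1 = v1.
  by apply: comp_eq; [apply: anc_refl..|move=> a _; apply: anc_leq].
have vD : conn (blkof P v1) D.
  apply/rst_step/dep_edge_spl_inner => //; rewrite mu_v comp_v.
  have [dv _ _] := compP T2_inc v2T M_mem.
  exact: leq_ltn_trans (anc_leq T2_inc dv) lt_v21.
suff : conn b D <-> conn (blkof P v1) D by move->.
have := T1_irr bk vk sub sub_v; rewrite (maxv_eq v1T v1_max).
elim=> // [x y /conn_dep_edge1 //|x y _ IH|x y z _ IH1 _ IH2].
- by rewrite IH.
- by rewrite IH1 IH2.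
Qed.

Lemma conn_spl2 b : 1 <= b <= k -> {subset blk P b <= tV T2} -> conn b D.
Proof.
move=> bk sub; have [dv _ _] := compP T2_inc v2T M_mem.
have [Dk _ sub_D _] := pi_incr_blk T2_pi T2_range (anc_meml dv).
apply: clos_rst_mono (T2_irr bk Dk sub sub_D) => x y [xk sub_x not_ch ->].
have muT := sub_x _ (mu_mem xk).
split=> //; first by move=> z /sub_x /sub_spl2.
- move: not_ch; apply: contraNN; rewrite !mem_chain.
  by move/(inner2 muT).
- by rewrite (comp_spl_inner2 T1_inc T2_inc disj v1T v2T M_mem muT).
Qed.

Lemma irreducible_spl_inner : irreducible P T.
Proof.
move=> i j ik jk sub_i sub_j; rewrite maxv_spl_inner.
have conn_D b : 1 <= b <= k -> {subset blk P b <= tV T} -> conn b D.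
  by move=> bk /(blk_sub_spl bk) [/(conn_spl1 bk)|/(conn_spl2 bk)].
exact: rst_trans (conn_D _ ik sub_i) (rst_sym _ _ _ _ (conn_D _ jk sub_j)).
Qed.

End Inner.
End SplicePi.
End Partition.

Section ChainTree.
Variables (r : nat) (P : seq (seq nat)) (l : nat).
Hypotheses (HP : set_partition1 r P) (lk : 1 <= l <= size P).

Local Notation b := (blk P l).
Local Notation T := (chain_tree b).

Lemma inc_chain_tree : inc_tree T.
Proof.
have b_ne : b != [::] by case: HP => ne _ _ _ _; apply: ne.
split=> //.
- by apply/allP => x /(mem_blk_range HP lk) /andP[].
- move=> x xb xr; have : has (fun a => a < x) b.
    by apply/hasP; exists (troot T); rewrite ?troot_mem // ltn_neqAle eq_sym xr troot_le.
  by case/bigmax_seq_mem.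
Qed.

Lemma anc_chain_tree a x : x \in b -> anc T a x <-> (a \in b /\ a <= x).
Proof.
move=> xb; apply: (anc_predecessor_chain inc_chain_tree) => //.
by apply: troot_mem; case: HP => ne _ _ _ _; apply: ne.
Qed.

Lemma pi_incr_chain_tree : pi_incr P T.
Proof.
split; first exact: inc_chain_tree.
- by move=> x xb; rewrite (blkof_blk HP lk xb).
- by move=> i j ib jb _ /ltnW le_ij; apply/anc_chain_tree.
Qed.

(* The only block inside [T] is [b] itself. *)
Lemma irreducible_chain_tree : irreducible P T.
Proof.
have blk_l i : 1 <= i <= size P -> {subset blk P i <= b} -> i = l.
  move=> ik sub; rewrite -(blkof_blk HP ik (mu_mem HP ik)).
  exact: (blkof_blk HP lk (sub _ (mu_mem HP ik))).
by move=> i j ik jk /(blk_l _ ik) -> /(blk_l _ jk) ->; apply: rst_refl.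
Qed.

Lemma in_range_chain_tree : in_range r T.
Proof. by move=> x /(mem_blk_range HP lk). Qed.

End ChainTree.

Section Forest.
Variable r : nat.

Definition disjoint_trees (A : pred nat) (f : nat -> itree) :=
  forall l l' x, A l -> A l' -> l != l' -> x \in tV (f l) -> x \notin tV (f l').

Definition covering_trees (A : pred nat) (f : nat -> itree) :=
  forall x, 1 <= x <= r -> exists2 l, A l & x \in tV (f l).

Variables (A A' : nat -> bool) (f : nat -> itree) (i j : nat) (t : itree).
Hypothesis A'E : forall l, A' l = A l && (l != i).
Hypotheses (Ai : A i) (Aj : A j) (ji : j != i) (tE : tV t = tV (f i) ++ tV (f j)).

Lemma disjoint_trees_merge : disjoint_trees A f -> disjoint_trees A' (upd f j t).
Proof.
move=> disj l l' x; rewrite !A'E => /andP[Al li] /andP[Al' l'i] ll'; rewrite /upd.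
case: (l =P j) => [lj|_]; case: (l' =P j) => [l'j|_].
- by rewrite lj l'j eqxx in ll'.
- rewrite tE mem_cat => /orP[xi|xj].
  + by apply: (disj i l'); rewrite // eq_sym.
  + by apply: (disj j l'); rewrite // -lj.
- move=> xl; rewrite tE mem_cat negb_or.
  by rewrite (disj l i) ?(disj l j) // -?l'j // eq_sym.
- exact: disj.
Qed.

Lemma covering_trees_merge : covering_trees A f -> covering_trees A' (upd f j t).
Proof.
move=> cover x /cover[l Al xl]; rewrite /upd.
case: (l =P i) => [li|/eqP li]; last case: (l =P j) => [lj|/eqP lj].
- by exists j; rewrite ?A'E ?Aj ?ji ?eqxx // tE mem_cat -li xl.
- by exists j; rewrite ?A'E ?Aj ?ji ?eqxx // tE mem_cat -lj xl orbT.
- by exists l; rewrite ?A'E ?Al ?li // (negbTE lj).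
Qed.

End Forest.

Section Construction.
Variables (r : nat) (P : seq (seq nat)) (c : nat -> nat).
Hypotheses (HP : set_partition1 r P) (r2 : 2 <= r).
Hypothesis c_range : forall i, 2 <= i <= (size P).-1 -> 1 <= c i <= mu P i.
Local Notation k := (size P).

(* Indices of the trees still present at the input to Stage [i]. *)
Definition live (i l : nat) := (l == 1) || (i <= l <= k).

Lemma liveS i : 2 <= i -> forall l, live i.+1 l = live i l && (l != i).
Proof. by move=> i2 l; rewrite /live; lia. Qed.

Definition pending_tree (l : nat) (T : itree) :=
  [/\ pi_incr P T, irreducible P T, in_range r T, mu P l \in tV T &
      forall x, x \in tV T -> x <= mu P l].

Record stage_inv (i : nat) (s : cstate) : Prop := StageInv {
  inv_pi1 : pi_incr P (taus s 1);
  inv_range1 : in_range r (taus s 1);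
  inv_nu : nu s \in tV (taus s 1);
  inv_lt1 : forall x, x \in tV (taus s 1) -> x < mu P i;
  inv_pending : forall l, i <= l <= k -> pending_tree l (taus s l);
  inv_disj : disjoint_trees (live i) (taus s);
  inv_cover : covering_trees r (live i) (taus s);
  inv_red : t1spliced s -> ~ irreducible P (taus s 1)
}.

Lemma stage_inv_init : stage_inv 2 (init P).
Proof.
have [b1 k2] := blk1_partition HP r2.
have l1 : 1 <= 1 <= k by rewrite leqnn ltnW.
have lk l : live 2 l -> 1 <= l <= k.
  by case/orP=> [/eqP ->//|/andP[/ltnW -> ->]].
split=> //=.
- exact: pi_incr_chain_tree HP l1.
- exact: in_range_chain_tree HP l1.
- by move=> x /leq_mu /leq_ltn_trans; apply; exact: (mu_ltn HP (leqnn 1) (ltnSn 1) k2).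
- move=> l /andP[/ltnW l1' lk']; have lk'' : 1 <= l <= k by rewrite l1'.
  split; [exact: (pi_incr_chain_tree HP lk'') | exact: (irreducible_chain_tree HP lk'') |
          exact: (in_range_chain_tree HP lk'') | exact: (mu_mem HP lk'') | by move=> x /leq_mu].
- move=> l l' x /lk ll /lk ll' ne xl; apply/negP => xl'.
  by move: ne; rewrite -(blkof_blk HP ll xl) -(blkof_blk HP ll' xl') eqxx.
- move=> x /(blkofP HP) [bk xb]; exists (blkof P x) => //.
  by rewrite /live; case/andP: bk; case: (blkof P x) => [|[|n]].
Qed.

Section Step.
Variables (i : nat) (s : cstate).
Hypotheses (i2 : 2 <= i) (ik : i < k) (inv : stage_inv i s).

Local Notation tau := (taus s).

Let live_i : live i i. Proof. rewrite /live; lia. Qed.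
Let live1 : live i 1. Proof. by rewrite /live eqxx. Qed.
Let i1 : 1 != i. Proof. lia. Qed.
Let tau_i : pending_tree i (tau i). Proof. by apply: (inv_pending inv); lia. Qed.
Let mu_i_lt j : i < j <= k -> mu P i < mu P j.
Proof. by case/andP=> ij jk; apply: (mu_ltn HP _ ij jk); lia. Qed.
Let disj_i l : live i l -> l != i -> forall x, x \in tV (tau i) -> x \notin tV (tau l).
Proof. by move=> ll li x; apply: (inv_disj inv) => //; rewrite eq_sym. Qed.
Let c_i : 1 <= c i <= mu P i.
Proof. by apply: c_range; rewrite i2 -ltnS (ltn_predK ik). Qed.

Lemma stage_inv_internal : (c i \in tV (tau 1)) || (c i \in tV (tau i)) ->
  stage_inv i.+1 (CState (upd tau 1 (spl (tau i) (mu P i) (tau 1) (nu s))) (c i) true).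
Proof.
case: tau_i => pi_i _ range_i mu_i le_mu_i.
have [pi1 range1 nu1 lt1 pending disj cover _] := inv.
have disj_i1 := disj_i live1 i1.
have lt_mu_i : mu P i < mu P i.+1 by apply: mu_i_lt; rewrite ltnSn.
move=> c_in; split=> /=.
- exact: (pi_incr_spl HP pi_i pi1 range_i range1 disj_i1 mu_i nu1).
- exact: (in_range_spl range_i range1).
- by rewrite mem_cat orbC.
- move=> x; rewrite mem_cat => /orP[/le_mu_i|/lt1] lt_x.
  + exact: leq_ltn_trans lt_x lt_mu_i.
  + exact: ltn_trans lt_x lt_mu_i.
- by move=> l /andP[/ltnW il lk]; rewrite /upd ifN; [apply: pending; rewrite il | lia].
- by apply: (disjoint_trees_merge (liveS i2) live_i live1 _ disj).
- by apply: (covering_trees_merge (liveS i2) live1 i1 _ cover).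
- by move=> _; apply: (reducible_spl_top HP pi_i pi1 range_i range1 disj_i1 mu_i nu1).
Qed.

Lemma stage_inv_external j : i < j <= k -> c i \in tV (tau j) -> c i \notin tV (tau i) ->
  stage_inv i.+1 (CState (upd tau j (spl (tau i) (mu P i) (tau j) (c i))) (nu s) (t1spliced s)).
Proof.
move=> ijk cj not_ci.
case: tau_i => pi_i irr_i range_i mu_i le_mu_i.
have [pi1 range1 nu1 lt1 pending disj cover red] := inv.
have [pi_j irr_j range_j mu_j le_mu_j] : pending_tree j (tau j).
  by apply: pending; case/andP: ijk => /ltnW -> ->.
have /andP[ij jk] := ijk.
have j1 : j != 1 by rewrite neq_ltn (ltn_trans i2 ij) orbT.
have ji : j != i by rewrite neq_ltn ij orbT.
have live_j : live i j by rewrite /live (ltnW ij) jk orbT.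
have disj_ij := disj_i live_j ji.
have lt_ci : c i < mu P i.
  rewrite ltn_neqAle; apply/andP; split; first by apply: contraNneq not_ci => ->.
  by case/andP: c_i.
have lt_mu_ij := mu_i_lt ijk.
have maxv_j : maxv (tau j) = mu P j by apply: maxv_eq.
have upd1 : upd tau j (spl (tau i) (mu P i) (tau j) (c i)) 1 = tau 1 by rewrite /upd ifN // eq_sym.
split=> /=; rewrite ?upd1 //.
- move=> x /lt1 /ltn_trans; apply; apply: mu_i_lt; lia.
- move=> l lk; rewrite /upd; case: (l =P j) => [->|_]; last by apply: pending; lia.
  split.
  + exact: (pi_incr_spl HP pi_i pi_j range_i range_j disj_ij mu_i cj).
  + apply: (irreducible_spl_inner HP pi_i pi_j range_i range_j disj_ij mu_i cj) => //.
    by move=> x /le_mu_i le_x; rewrite maxv_j (leq_ltn_trans le_x lt_mu_ij).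
  + exact: (in_range_spl range_i range_j).
  + by rewrite mem_cat mu_j orbT.
  + move=> x; rewrite mem_cat => /orP[/le_mu_i le_x|/le_mu_j //].
    exact: leq_trans le_x (ltnW lt_mu_ij).
- by apply: (disjoint_trees_merge (liveS i2) live_i live_j _ disj).
- by apply: (covering_trees_merge (liveS i2) live_j ji _ cover).
Qed.

Lemma stage_inv_step : stage_inv i.+1 (stage P c i s).
Proof.
rewrite /stage; case: ifPn => [|c_out]; first exact: stage_inv_internal.
have [not_c1 not_ci] : c i \notin tV (tau 1) /\ c i \notin tV (tau i).
  by apply/andP; rewrite -negb_or.
have c_r : 1 <= c i <= r.
  case/andP: c_i => -> le_cmu; have ik1 : 1 <= i <= k by rewrite (ltnW i2) ltnW.
  by apply: leq_trans le_cmu _; case/andP: (mem_blk_range HP ik1 (mu_mem HP ik1)).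
have [l live_l cl] := inv_cover inv c_r.
have il : i < l <= k.
  case/orP: live_l => [/eqP l1|/andP[il ->]]; first by rewrite l1 in cl; rewrite cl in not_c1.
  rewrite andbT ltn_neqAle il andbT.
  by apply: contraNneq not_ci => eq_il; rewrite [in tV _]eq_il.
have : has (fun j => c i \in tV (tau j)) (iota i.+1 (k - i)).
  by apply/hasP; exists l; rewrite // mem_iota addSn subnKC ?(ltnW ik) // ltnS.
case/find_iota; rewrite [i.+1 + (k - i)]addSn subnKC ?(ltnW ik) // ltnS => ijk cj.
exact: stage_inv_external.
Qed.

End Step.

Lemma state_beforeS i : 2 <= i -> state_before P c i.+1 = stage P c i (state_before P c i).
Proof.
move=> i2; rewrite /state_before subSn // -[(i - 2).+1]addn1 iotaD foldl_cat /=.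
by rewrite subnKC.
Qed.

Lemma stage_inv_before i : 2 <= i <= k -> stage_inv i (state_before P c i).
Proof.
elim: i => // i IH /andP[i1 ik].
case: (ltngtP i 1) => [|i_gt1|->]; first by case: i {IH} i1 ik.
- by rewrite state_beforeS //; apply: stage_inv_step => //; apply: IH; rewrite i_gt1 ltnW.
- exact: stage_inv_init.
Qed.

Lemma psi_spec : pi_incr P (psi P c) /\ ~ irreducible P (psi P c).
Proof.
have [_ k2] := blk1_partition HP r2.
have kk : 2 <= k <= k by rewrite k2 leqnn.
have [pi1 range1 nu1 lt1 pending disj _ _] := stage_inv_before kk.
have /pending[pi_k _ range_k mu_k le_mu_k] : k <= k <= k by rewrite leqnn.
have k1 : 1 != k by rewrite neq_ltn k2.
have disj_k1 : forall x, x \in tV (taus (state_before P c k) k) ->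
    x \notin tV (taus (state_before P c k) 1).
  by move=> x; apply: disj; rewrite /live ?eqxx ?leqnn ?orbT // eq_sym.
split.
- exact: (pi_incr_spl HP pi_k pi1 range_k range1 disj_k1 mu_k nu1).
- exact: (reducible_spl_top HP pi_k pi1 range_k range1 disj_k1 mu_k nu1 le_mu_k lt1).
Qed.

End Construction.

Theorem proposition3p7 (r : nat) (P : seq (seq nat)) (c : nat -> nat) :
  2 <= r -> set_partition1 r P ->
  (forall i, 2 <= i <= (size P).-1 -> 1 <= c i <= mu P i) ->
  [/\ (forall l, 1 <= l <= size P ->
         pi_incr P (taus (init P) l) /\ irreducible P (taus (init P) l)),
      (forall i, 2 <= i <= size P ->
         (forall l, i <= l <= size P ->
            [/\ pi_incr P (taus (state_before P c i) l),
                irreducible P (taus (state_before P c i) l) &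
                mu P l \in tV (taus (state_before P c i) l)]) /\
         (t1spliced (state_before P c i) ->
            pi_incr P (taus (state_before P c i) 1) /\
            ~ irreducible P (taus (state_before P c i) 1))) &
      pi_incr P (psi P c) /\ ~ irreducible P (psi P c)].
Proof.
move=> r2 HP c_range; split.
- by move=> l lk; split; [exact: pi_incr_chain_tree HP lk | exact: irreducible_chain_tree HP lk].
- move=> i ik; have [pi1 _ _ _ pending _ _ red] := stage_inv_before HP r2 c_range ik.
  split=> [l /pending[]|/red] //; split.
- exact: psi_spec HP r2 c_range.
Qed.
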